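(* Let $M$ be the All Attack Structure for a plant $G$, observable events $\Sigma_o$, supervisor $S$ realized by $H$, vulnerable events $\Sigma_v$, and secret initial states $X_{sec}\subseteq X_0$. If $q_e$ is an undetectable environment state of $M$, then every environment state of $M$ reachable from $q_e$ is either undetectable or a negative detected state.
   Context: A plant is a finite automaton $G=(X,\Sigma,\delta,X_0)$ with partial transition function $\delta$ (extended to strings) and initial states $X_0\subseteq X$; $\Sigma=\Sigma_o\dot\cup\Sigma_{uo}$. A supervisor $S$ is realized by a deterministic automaton $H=(Z,\Sigma,\xi,z_0)$ (its control decision after a string leading $H$ to $z$ is $\Delta_H(z)$, the set of events defined at $z$; only observable events change the state of $H$). $\Sigma_v\subseteq\Sigma_o$ are vulnerable events and $X_{sec}\subseteq X_0$ secret initial states. Operators: for $q\subseteq X$, $\gamma\subseteq\Sigma$, $\sigma\in\Sigma_o$: $\textsf{UR}_\gamma(q)=\{\delta(x,s):x\in q,s\in(\Sigma_{uo}\cap\gamma)^*\}$, $\textsf{NX}_\sigma(q)=\{\delta(x,\sigma):x\in q\}$, $\textsf{NX}_\epsilon(q)=q$, $\mathcal{O}(q,\gamma)=\{\sigma\in\Sigma_o\cap\gamma:\exists x\in q,\exists w\in(\Sigma_{uo}\cap\gamma)^*,\delta(x,w\sigma)\text{ defined}\}$. Augmented system: states $\tilde X\subseteq X_0\times X$, $\tilde X_0=\{(x_0,x_0):x_0\in X_0\}$, $\tilde\delta((x_0,x),\sigma)=(x_0,\delta(x,\sigma))$; $\widetilde{\textsf{UR}},\widetilde{\textsf{NX}},\mathcal{O}(\tilde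 q,\gamma)$ defined analogously. $I(\tilde q)=\{x_0:(x_0,x)\in\tilde q\text{ for some }x\}$. All Attack Structure: for $\sigma\in\Sigma_o$, $\hat\sigma$ is a doctored copy, $\hat\epsilon$ an erasure symbol; $\mathcal{V}(\sigma)=\{\hat\sigma':\sigma'\in\Sigma_v\}\cup\{\hat\epsilon\}$ if $\sigma\in\Sigma_v$, else $\{\hat\sigma\}$. $M=(Q,\Sigma_M,f,q_0)$, $q_0=(X_0,\tilde X_0,z_0)$, states reachable from $q_0$, $Q=Q_e\dot\cup Q_a$: environment states $(q,\tilde q,z)$ with $q\subseteq X,\tilde q\subseteq\tilde X,z\in Z\cup\{z_{\textsf{att}}\}$ ($z_{\textsf{att}}$ new, $\Delta_H(z_{\textsf{att}})=\emptyset$); attack states $(q,\tilde q,z,\sigma)$. At $(q,\tilde q,z)$ enabled events are $\mathcal{O}(\tilde q,\Delta_H(z))$ if $z\in Z$, none if $z=z_{\textsf{att}}$, with $f((q,\tilde q,z),\sigma)=(q,\tilde q,z,\sigma)$. At $(q,\tilde q,z,\sigma)$ enabled events are $\mathcal{V}(\sigma)$, with $f((q,\tilde q,z,\sigma),\hat\sigma_a)=(q',\tilde q',z')$, $q'=\textsf{NX}_{\sigma_a}(\textsf{UR}_{\Delta_H(z)}(q))$, $\tilde q'=\widetilde{\textsf{NX}}_\sigma(\widetilde{\textsf{UR}}_{\Delta_H(z)}(\tilde q))$, $z'=\xi(z,\sigma_a)$ if $q'\ne\emptyset$ (with $\xi(z,\epsilon)=z$), $z'=z_{\textsf{att}}$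 otherwise. An environment state $(q,\tilde q,z)$ is a negative detected state if $I(\tilde q)\cap X_{sec}=\emptyset$. It is undetectable if (i) $I(\tilde q)\cap X_{sec}\neq\emptyset$, and (ii) for every $(x_0,x)\in\widetilde{\textsf{UR}}_{\Delta_H(z)}(\tilde q)$ with $x_0\in X_{sec}$ there exists $(x_0',x)\in\widetilde{\textsf{UR}}_{\Delta_H(z)}(\tilde q)$ with $x_0'\notin X_{sec}$. *)

From mathcomp Require Import all_boot.
Set Implicit Arguments. Unset Strict Implicit. Unset Printing Implicit Defensive.

Section Operators.
Variables (Sigma : finType) (obs : {set Sigma}).

Variables (S : finType) (d : S -> Sigma -> option S).

Definition urel (gamma : {set Sigma}) : rel S :=
  fun x y => [exists e, [&& e \in gamma, e \notin obs & d x e == Some y]].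

Definition UR (gamma : {set Sigma}) (q : {set S}) : {set S} :=
  [set y | [exists x in q, connect (urel gamma) x y]].

Definition NX (sigma : Sigma) (q : {set S}) : {set S} :=
  [set y | [exists x in q, d x sigma == Some y]].

(* NX over Sigma_o cup {epsilon}; None stands for epsilon *)
Definition NXo (a : option Sigma) (q : {set S}) : {set S} :=
  match a with Some sigma => NX sigma q | None => q end.

Definition Oset (q : {set S}) (gamma : {set Sigma}) : {set Sigma} :=
  [set sigma | [&& sigma \in obs, sigma \in gamma &
     [exists x in q, exists y, connect (urel gamma) x y && (d y sigma != None)]]].
End Operators.

Section AAS.
Variables (X Sigma Z : finType).
Variables (delta : X -> Sigma -> option X) (X0 : {set X}) (obs : {set Sigma}).
Variables (xi : Z -> Sigma -> option Z) (z0 : Z).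
Variables (Sv : {set Sigma}) (Xsec : {set X}).

(* augmented system on X0 x X (pairs (x0, x)) *)
Definition deltat (p : X * X) (sigma : Sigma) : option (X * X) :=
  omap (fun y => (p.1, y)) (delta p.2 sigma).

Definition Xt0 : {set X * X} := [set (x, x) | x in X0].

Definition Iset (qt : {set X * X}) : {set X} := [set p.1 | p in qt].

(* supervisor states extended with z_att, encoded as None *)
Definition DeltaH (z : option Z) : {set Sigma} :=
  match z with Some z => [set e | xi z e != None] | None => set0 end.

(* xi(z, sigma_a), with xi(z, epsilon) = z; None means undefined *)
Definition xio (z : option Z) (a : option Sigma) : option Z :=
  match z, a with
  | Some z, Some s => xi z s
  | Some z, None => Some z
  | None, _ => None
  end.

(* V(sigma): None stands for epsilon-hat, Some s for s-hat *)
Definition Vset (sigma : Sigma) (a : option Sigma) : bool :=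
  if sigma \in Sv then (match a with None => true | Some s => s \in Sv end)
  else a == Some sigma.

(* states of M: environment states (q, qt, z) and attack states (q, qt, z, sigma);
   z = None encodes z_att *)
Inductive mstate :=
  | Env of {set X} & {set X * X} & option Z
  | Att of {set X} & {set X * X} & option Z & Sigma.

(* events of M: observable events sigma, and doctored copies
   (MHat (Some s) = s-hat, MHat None = epsilon-hat) *)
Inductive mlabel := MObs of Sigma | MHat of option Sigma.

Definition q0 : mstate := Env X0 Xt0 (Some z0).

Definition fM (s : mstate) (l : mlabel) : option mstate :=
  match s, l with
  | Env q qt z, MObs sigma =>
      if sigma \in Oset obs deltat qt (DeltaH z) then Some (Att q qt z sigma)
      else None
  | Att q qt z sigma, MHat a =>
      if Vset sigma a then
        let q' := NXo delta a (UR obs delta (DeltaH z) q) in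
        let qt' := NX deltat sigma (UR obs deltat (DeltaH z) qt) in
        if q' == set0 then Some (Env q' qt' None)
        else match xio z a with
             | Some z' => Some (Env q' qt' (Some z'))
             | None => None
             end
      else None
  | _, _ => None
  end.

Inductive reachM (s : mstate) : mstate -> Prop :=
  | reachM_refl : reachM s s
  | reachM_step s1 l s2 : reachM s s1 -> fM s1 l = Some s2 -> reachM s s2.

Definition negative_detected (s : mstate) : Prop :=
  match s with
  | Env _ qt _ => Iset qt :&: Xsec = set0
  | _ => False
  end.

Definition undetectable (s : mstate) : Prop :=
  match s with
  | Env _ qt z =>
      Iset qt :&: Xsec != set0 /\
      forall x0 x, (x0, x) \in UR obs deltat (DeltaH z) qt -> x0 \in Xsec ->
        exists x0', (x0', x) \in UR obs deltat (DeltaH z) qt /\ x0' \notin Xsec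
  | _ => False
  end.

Definition is_env (s : mstate) : Prop :=
  match s with Env _ _ _ => True | _ => False end.

End AAS.

(** The augmented system only ever moves the second component of a pair
    (x0, x), so if every secret initial state x0 is accompanied by a
    non-secret x0' leading to the same current state x, this stays true after
    any unobservable reach and any observable step.  Hence the second clause
    of undetectability is invariant along the All Attack Structure, and a
    reachable environment state that is not undetectable must violate the
    first clause, i.e. be negative detected. *)

From mathcomp Require Import all_boot.

Set Implicit Arguments.
Unset Strict Implicit.
Unset Printing Implicit Defensive.

Section Shadowed.
Variables (I T : finType) (Isec : {set I}).

Definition shadowed (A : {set I * T}) : Prop :=
  forall a x, (a, x) \in A -> a \in Isec ->
    exists a', (a', x) \in A /\ a' \notin Isec.

Lemma shadowed_fibrewise (R : rel T) (A B : {set I * T}) :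
    (forall a y, ((a, y) \in B) = [exists x, ((a, x) \in A) && R x y]) ->
  shadowed A -> shadowed B.
Proof.
move=> BE shA a y; rewrite BE => /existsP[x /andP[axA Rxy]] aSec.
have [a' [a'xA a'Sec]] := shA a x axA aSec.
by exists a'; rewrite BE; split=> //; apply/existsP; exists x; rewrite a'xA.
Qed.

Lemma connect_fibrewise (e : rel T) (e' : rel (I * T)) :
    (forall a x b y, e' (a, x) (b, y) = (a == b) && e x y) ->
  forall a x b y, connect e' (a, x) (b, y) = (a == b) && connect e x y.
Proof.
move=> e'E a x b y; apply/idP/andP.
- case/connectP=> p; elim: p a x => [|[a' x'] p IHp] a x /=.
    by move=> _ [-> ->]; rewrite connect0.
  rewrite e'E => /andP[/andP[/eqP<- exx'] pp] lastE.
  have [ab x'y] := IHp a x' pp lastE.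
  by split=> //; apply: connect_trans (connect1 exx') x'y.
- case=> /eqP<- /connectP[p pp ->]; apply/connectP.
  exists (map (pair a) p); last by rewrite last_map.
  by rewrite path_map; apply: sub_path pp => u v /= euv; rewrite e'E eqxx.
Qed.

End Shadowed.

Section Augmented.
Variables (X Sigma : finType) (delta : X -> Sigma -> option X).
Variables (obs : {set Sigma}) (Xsec : {set X}).

Lemma deltat_pairE a x e b y :
  (deltat delta (a, x) e == Some (b, y)) = (a == b) && (delta x e == Some y).
Proof.
by rewrite /deltat /=; case: (delta x e) => [z|]; rewrite /= ?andbF // !xpair_eqE.
Qed.

Lemma urel_deltat g a x b y :
  urel obs (deltat delta) g (a, x) (b, y) = (a == b) && urel obs delta g x y.
Proof.
apply/existsP/andP => [[e /and3P[eg eobs]] | [ab /existsP[e /and3P[eg eobs dxe]]]].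
  rewrite deltat_pairE => /andP[ab dxe].
  by split=> //; apply/existsP; exists e; rewrite eg eobs.
by exists e; rewrite eg eobs deltat_pairE ab.
Qed.

Lemma mem_UR_deltat g A a y :
  ((a, y) \in UR obs (deltat delta) g A) =
  [exists x, ((a, x) \in A) && connect (urel obs delta g) x y].
Proof.
rewrite inE; apply/existsP/existsP => [[[b x] /andP[bxA]] | [x /andP[axA xy]]].
  rewrite (connect_fibrewise (urel_deltat g)) => /andP[/eqP<- xy].
  by exists x; rewrite bxA.
by exists (a, x); rewrite axA (connect_fibrewise (urel_deltat g)) eqxx.
Qed.

Lemma mem_NX_deltat sigma A a y :
  ((a, y) \in NX (deltat delta) sigma A) =
  [exists x, ((a, x) \in A) && (delta x sigma == Some y)].
Proof.
rewrite inE; apply/existsP/existsP => [[[b x] /andP[bxA]] | [x /andP[axA dxy]]].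
  by rewrite deltat_pairE => /andP[/eqP<- dxy]; exists x; rewrite bxA.
by exists (a, x); rewrite axA deltat_pairE eqxx.
Qed.

Lemma shadowed_UR g A :
  shadowed Xsec A -> shadowed Xsec (UR obs (deltat delta) g A).
Proof. exact/shadowed_fibrewise/mem_UR_deltat. Qed.

Lemma shadowed_NX sigma A :
  shadowed Xsec A -> shadowed Xsec (NX (deltat delta) sigma A).
Proof. exact/shadowed_fibrewise/mem_NX_deltat. Qed.

End Augmented.

Section AllAttackStructure.
Variables (X Sigma Z : finType) (delta : X -> Sigma -> option X).
Variables (obs : {set Sigma}) (xi : Z -> Sigma -> option Z).
Variables (Sv : {set Sigma}) (Xsec : {set X}).

Definition mshadowed (s : mstate X Sigma Z) : Prop :=
  match s with
  | Env _ qt z | Att _ qt z _ =>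
      shadowed Xsec (UR obs (deltat delta) (DeltaH xi z) qt)
  end.

Lemma fM_shadowed s1 l s2 :
  fM delta obs xi Sv s1 l = Some s2 -> mshadowed s1 -> mshadowed s2.
Proof.
case: s1 l => [q qt z | q qt z sigma] [sigma' | a] //=.
  by case: ifP => // _ [<-].
case: ifP => // _.
case: ifP => _; first by case=> <- sh; apply/shadowed_UR/shadowed_NX.
by case: xio => // z' [<-] sh; apply/shadowed_UR/shadowed_NX.
Qed.

Lemma reachM_shadowed s1 s2 :
  reachM delta obs xi Sv s1 s2 -> mshadowed s1 -> mshadowed s2.
Proof.
elim=> [|s l s' _ IH fMs] // sh1.
exact: fM_shadowed fMs (IH sh1).
Qed.

Lemma undetectable_shadowed s :
  undetectable delta obs xi Xsec s -> mshadowed s.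
Proof. by case: s => //= q qt z []. Qed.

Lemma shadowed_undetectable_or_negative s :
    is_env s -> mshadowed s ->
  undetectable delta obs xi Xsec s \/ negative_detected Xsec s.
Proof.
case: s => //= q qt z _ sh.
by case: (eqVneq (Iset qt :&: Xsec) set0) => [|nonneg]; [right | left].
Qed.

End AllAttackStructure.

Theorem proposition4 (X Sigma Z : finType)
  (delta : X -> Sigma -> option X) (X0 : {set X}) (obs : {set Sigma})
  (xi : Z -> Sigma -> option Z) (z0 : Z) (Sv : {set Sigma}) (Xsec : {set X}) :
  (* only observable events change the state of H *)
  (forall z e z', e \notin obs -> xi z e = Some z' -> z' = z) ->
  Sv \subset obs ->
  Xsec \subset X0 ->
  forall qe : mstate X Sigma Z,
    reachM delta obs xi Sv (q0 Sigma X0 z0) qe ->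
    is_env qe ->
    undetectable delta obs xi Xsec qe ->
    forall s, reachM delta obs xi Sv qe s -> is_env s ->
      undetectable delta obs xi Xsec s \/ negative_detected Xsec s.
Proof.
move=> _ _ _ qe _ _ qe_undetectable s qe_s s_env.
apply: shadowed_undetectable_or_negative s_env _.
exact: reachM_shadowed qe_s (undetectable_shadowed qe_undetectable).
Qed.
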